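(* Let $\mathcal{X}$ and $\mathcal{H}$ be finite sets and let $P_\mathcal{D}$ be a probability distribution on $\mathcal{X}$ (the data distribution). Let $\{P_{\theta_I}(\mathbf{x}|\mathbf{h})\}_{\theta_I\in\Theta_I}$ be a family of conditional distributions of $\mathbf{x}\in\mathcal{X}$ given $\mathbf{h}\in\mathcal{H}$ and $\{P_{\theta_J}(\mathbf{h})\}_{\theta_J\in\Theta_J}$ a family of distributions on $\mathcal{H}$, and for $\theta=(\theta_I,\theta_J)$ let $P_\theta(\mathbf{x})=\sum_{\mathbf{h}}P_{\theta_I}(\mathbf{x}|\mathbf{h})P_{\theta_J}(\mathbf{h})$ and $L(\theta)=\mathbb{E}_{\mathbf{x}\sim P_\mathcal{D}}[\log P_\theta(\mathbf{x})]$. Let $\theta^\ast=(\theta_I^\ast,\theta_J^\ast)$ be a maximizer of $L$. Suppose $(\hat\theta_I,\hat q)$ is a maximizer of $$(\theta_I,q)\mapsto \mathbb{E}_{\mathbf{x}\sim P_\mathcal{D}}\Big[\log \sum_{\mathbf{h}} P_{\theta_I}(\mathbf{x}|\mathbf{h})\, q_\mathcal{D}(\mathbf{h})\Big],$$ where $\theta_I$ ranges over $\Theta_I$ and $q$ ranges over all conditional probability distributions $q(\mathbf{h}|\mathbf{x})$ on $\mathcal{H}$ given $\mathbf{x}\in\mathcal{X}$, and $q_\mathcal{D}(\mathbf{h}):=\sum_{\tilde{\mathbf{x}}}q(\mathbf{h}|\tilde{\mathbf{x}})P_\mathcal{D}(\tilde{\mathbf{x}})$. Let $\hat q_\mathcal{D}$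 be the distribution on $\mathcal{H}$ associated with $\hat q$, and assume the maximal value above is finite. Then: (1) If there exists $\hat\theta_J\in\Theta_J$ with $P_{\hat\theta_J}(\mathbf{h})=\hat q_\mathcal{D}(\mathbf{h})$ for all $\mathbf{h}$, then $(\hat\theta_I,\hat\theta_J)$ is a global maximizer of $L$; in particular if the maximizer of $L$ is unique then $(\hat\theta_I,\hat\theta_J)=(\theta_I^\ast,\theta_J^\ast)$. (2) For every $\theta_J\in\Theta_J$, $$L(\theta_I^\ast,\theta_J^\ast)-L(\hat\theta_I,\theta_J)\le \mathrm{KL}\big(\hat q_\mathcal{D}\,\|\,P_{\theta_J}\big).$$
   Context: $\mathrm{KL}(p\|r)=\sum_{\mathbf{h}}p(\mathbf{h})\log\frac{p(\mathbf{h})}{r(\mathbf{h})}$ denotes the Kullback–Leibler divergence (possibly $+\infty$). The parameter $\hat\theta_I$ is called the best optimistic lower layer (BOLL). *)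

From mathcomp Require Import ssreflect ssrfun ssrbool eqtype ssrnat seq choice fintype.
From Stdlib Require Import Reals.
Set Implicit Arguments.
Unset Strict Implicit.

Open Scope R_scope.

Definition rsum (T : finType) (f : T -> R) : R :=
  foldr (fun x acc => f x + acc) 0 (enum T).

(* Extended reals bounded above: None = -infinity (values of log-likelihoods). *)
Definition eR := option R.

Definition eR_le (a b : eR) : Prop :=
  match a, b with
  | None, _ => True
  | Some _, None => False
  | Some x, Some y => x <= y
  end.

Definition eR_addr (a : eR) (r : R) : eR := option_map (fun b => b + r) a.

Definition is_distr (T : finType) (p : T -> R) : Prop :=
  (forall t, 0 <= p t) /\ rsum p = 1.

Definition is_cond_distr (X H : finType) (q : X -> H -> R) : Prop :=
  forall x, is_distr (q x).

(* E_{x ~ PD}[ log f(x) ], with value -oo when f(x) <= 0 for some x of positive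
   PD-mass; terms with PD x = 0 contribute 0 (convention 0 log 0 = 0). *)
Definition Elog (X : finType) (PD : X -> R) (f : X -> R) : eR :=
  if has (fun x => if Rlt_dec 0 (PD x) then
                     (if Rle_dec (f x) 0 then true else false) else false) (enum X)
  then None
  else Some (rsum (fun x => PD x * ln (f x))).

(* KL(p || r) = sum_h p h log (p h / r h); None = +oo (when p h > 0 = r h). *)
Definition KL (H : finType) (p r : H -> R) : option R :=
  if has (fun h => if Rlt_dec 0 (p h) then
                     (if Rle_dec (r h) 0 then true else false) else false) (enum H)
  then None
  else Some (rsum (fun h => if Rlt_dec 0 (p h) then p h * ln (p h / r h) else 0)).

Definition Pmarg (X H : finType) (TI TJ : Type)
  (PI : TI -> X -> H -> R) (PJ : TJ -> H -> R) (tI : TI) (tJ : TJ) (x : X) : R :=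
  rsum (fun h => PI tI x h * PJ tJ h).

Definition LL (X H : finType) (TI TJ : Type) (PD : X -> R)
  (PI : TI -> X -> H -> R) (PJ : TJ -> H -> R) (tI : TI) (tJ : TJ) : eR :=
  Elog PD (Pmarg PI PJ tI tJ).

Definition qD (X H : finType) (PD : X -> R) (q : X -> H -> R) (h : H) : R :=
  rsum (fun x => q x h * PD x).

Definition Lopt (X H : finType) (TI : Type) (PD : X -> R)
  (PI : TI -> X -> H -> R) (tI : TI) (q : X -> H -> R) : eR :=
  Elog PD (fun x => rsum (fun h => PI tI x h * qD PD q h)).

(* With a(x,h) = P_{thI^}(x|h) and pi = q^_D,
   both L(thI,thJ) and the optimistic objective at (thI,q) are mixture
   log-likelihoods E_x[log mix p x], mix p x = sum_h a(x,h) p(h), with weights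
   p = P_{thJ} resp. p = q_D; a q constant in x has q_D = q, so every value of L
   is an optimistic value, which gives part (1).  For part (2), pi maximizes the
   mixture log-likelihood over all weights; perturbing it towards a point mass
   gives the stationarity sum_x PD(x) a(x,h)/s(x) <= 1 (s = mix pi), hence the
   EM fixed point sum_x PD(x) a(x,h) pi(h)/s(x) = pi(h).  The Gibbs inequality
   log z <= z - 1 for the posterior a(x,h) pi(h)/s(x) bounds log s(x) - log t(x),
   t = mix P_{thJ}, and averaging over x with the fixed point yields KL. *)

From mathcomp Require Import ssreflect ssrfun ssrbool eqtype ssrnat seq choice fintype.
From Stdlib Require Import Reals Lra Psatz FunctionalExtensionality.
Open Scope R_scope.

Section FiniteSums.
Context {T : finType}.
Implicit Types (f g : T -> R).

Lemma rsum_add f g : rsum (fun x => f x + g x) = rsum f + rsum g.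
Proof. by rewrite /rsum; elim: (enum T) => [|x l IH] /=; lra. Qed.

Lemma rsum_sub f g : rsum (fun x => f x - g x) = rsum f - rsum g.
Proof. by rewrite /rsum; elim: (enum T) => [|x l IH] /=; lra. Qed.

Lemma rsum_scal c f : rsum (fun x => c * f x) = c * rsum f.
Proof. by rewrite /rsum; elim: (enum T) => [|x l IH] /=; nra. Qed.

Lemma rsum_0 : rsum (fun _ : T => 0) = 0.
Proof. by rewrite /rsum; elim: (enum T) => [|x l IH] /=; lra. Qed.

Lemma rsum_ext f g : (forall x, f x = g x) -> rsum f = rsum g.
Proof. by move=> E; rewrite (functional_extensionality _ _ E). Qed.

Lemma rsum_le f g : (forall x, f x <= g x) -> rsum f <= rsum g.
Proof.
move=> le_fg; rewrite /rsum; elim: (enum T) => [|x l IH] /=; first lra.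
by have := le_fg x; lra.
Qed.

Lemma rsum_ge0 f : (forall x, 0 <= f x) -> 0 <= rsum f.
Proof. by move=> f0; rewrite -rsum_0; apply: rsum_le. Qed.

Lemma rsum_delta g x0 : rsum (fun x => if x == x0 then g x else 0) = g x0.
Proof.
rewrite /rsum; have : x0 \in enum T by rewrite mem_enum.
elim: (enum T) (enum_uniq T) => [|y l IH] //= /andP [y_l l_uniq].
rewrite in_cons => /orP [/eqP x0y | x0_l].
- subst y; rewrite eqxx.
  suff -> : foldr (fun x acc => (if x == x0 then g x else 0) + acc) 0 l = 0 by lra.
  elim: l y_l {IH l_uniq} => [|z l IHl] //=; rewrite in_cons negb_or => /andP [x0z x0_l].
  by rewrite eq_sym (negbTE x0z) IHl //; lra.
- have -> : (y == x0) = false by apply/eqP => yx0; subst y; rewrite x0_l in y_l.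
  by rewrite IH //; lra.
Qed.

Lemma rsum_term f x : (forall y, 0 <= f y) -> f x <= rsum f.
Proof.
move=> f0; rewrite -(rsum_delta f x); apply: rsum_le => y.
by case: eqP => _; [lra | exact: f0].
Qed.

Lemma rsum_eq_le f g : (forall x, f x <= g x) -> rsum f = rsum g ->
  forall x, f x = g x.
Proof.
move=> le_fg E x.
have := rsum_term (fun y => g y - f y) x (fun y => ltac:(have := le_fg y; lra)).
by rewrite rsum_sub E; have := le_fg x; lra.
Qed.
End FiniteSums.
Arguments rsum_ext {T f} g.
Arguments rsum_le {T f g}.

Lemma rsum_swap {A B : finType} (f : A -> B -> R) :
  rsum (fun x => rsum (fun y => f x y)) = rsum (fun y => rsum (fun x => f x y)).
Proof.
have swap l : foldr (fun x acc => rsum (f x) + acc) 0 l =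
              rsum (fun y => foldr (fun x acc => f x y + acc) 0 l).
  elim: l => [|x l IH] /=; first by rewrite rsum_0.
  by rewrite IH -rsum_add.
exact: swap.
Qed.

Lemma ln_le_sub1 {z : R} : 0 < z -> ln z <= z - 1.
Proof. by move=> z_pos; have := exp_ineq1_le (ln z); rewrite exp_ln //; lra. Qed.

Lemma ln_div u v : 0 < u -> 0 < v -> ln (u / v) = ln u - ln v.
Proof.
move=> u_pos v_pos.
by rewrite /Rdiv ln_mult ?ln_Rinv //; apply: Rinv_0_lt_compat.
Qed.

(* Second-order lower bound for log(1+u) near 0, used for directional
   derivatives of the log-likelihood. *)
Lemma ln_1p_lower u : -1/2 <= u -> u - 2 * u ^ 2 <= ln (1 + u).
Proof.
move=> u_ge; have pos : 0 < 1 + u by lra.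
have Hinv := ln_le_sub1 (Rinv_0_lt_compat _ pos); rewrite ln_Rinv // in Hinv.
have gap : 1 - / (1 + u) - (u - 2 * u ^ 2) = u ^ 2 * (1 + 2 * u) * / (1 + u).
  by field; lra.
have : 0 <= u ^ 2 * (1 + 2 * u) * / (1 + u).
  apply: Rmult_le_pos; last by left; apply: Rinv_0_lt_compat.
  by apply: Rmult_le_pos; [apply: pow2_ge_0 | lra].
lra.
Qed.

Lemma ln_convex_step_lower s b t : 0 < s -> 0 <= b -> 0 < t <= 1/2 ->
  t * ((b / s - 1) - 2 * t * (b / s - 1) ^ 2) <= ln ((1 - t) * s + t * b) - ln s.
Proof.
move=> s_pos b0 [t_pos t_le].
have bs0 : 0 <= b / s by apply: Rmult_le_pos; [lra | left; apply: Rinv_0_lt_compat].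
have split_ln : ln ((1 - t) * s + t * b) = ln s + ln (1 + t * (b / s - 1)).
  rewrite -ln_mult //; last by nra.
  by congr ln; field; lra.
have := @ln_1p_lower (t * (b / s - 1)) ltac:(nra).
by rewrite split_ln; lra.
Qed.

Lemma le0_of_small_bound D C : (forall t, 0 < t <= 1/2 -> D <= 2 * t * C) -> D <= 0.
Proof.
move=> bound; apply: Rnot_lt_le => D_pos.
have D_le_C : D <= C by have := bound (1/2) ltac:(lra); lra.
have t_ok : 0 < D / (4 * C) <= 1/2.
  split; first by apply: Rdiv_lt_0_compat; lra.
  apply: (Rmult_le_reg_r (4 * C)); first lra.
  by field_simplify; lra.
have := bound _ t_ok.
have -> : 2 * (D / (4 * C)) * C = D / 2 by field; lra.
lra.
Qed.

Lemma eR_le_trans a b c : eR_le a b -> eR_le b c -> eR_le a c.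
Proof. by case: a => [x|] //; case: b => [y|] //; case: c => [z|] //=; lra. Qed.

Lemma Elog_some {X : finType} {PD f : X -> R} :
  (forall x, 0 < PD x -> 0 < f x) -> Elog PD f = Some (rsum (fun x => PD x * ln (f x))).
Proof.
move=> f_pos; rewrite /Elog; case: hasP => // [[x _]].
by case: Rlt_dec => // PDx; case: Rle_dec => // fx; have := f_pos x PDx; lra.
Qed.

Lemma Elog_inv {X : finType} {PD f : X -> R} {v : R} : Elog PD f = Some v ->
  (forall x, 0 < PD x -> 0 < f x) /\ v = rsum (fun x => PD x * ln (f x)).
Proof.
rewrite /Elog; case: hasP => // no_bad [<-]; split => // x PDx.
apply: Rnot_le_lt => fx; apply: no_bad; exists x; first by rewrite mem_enum.
by case: Rlt_dec => //; case: Rle_dec.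
Qed.

Lemma KL_inv {H : finType} {p r : H -> R} {k : R} : KL p r = Some k ->
  (forall h, 0 < p h -> 0 < r h) /\
  k = rsum (fun h => if Rlt_dec 0 (p h) then p h * ln (p h / r h) else 0).
Proof.
rewrite /KL; case: hasP => // no_bad [<-]; split => // h ph.
apply: Rnot_le_lt => rh; apply: no_bad; exists h; first by rewrite mem_enum.
by case: Rlt_dec => //; case: Rle_dec.
Qed.

Lemma qD_const {X H : finType} (PD : X -> R) (p : H -> R) :
  rsum PD = 1 -> qD PD (fun _ => p) = p.
Proof.
move=> PD1; apply: functional_extensionality => h.
by rewrite /qD -[rsum _]/(rsum (fun x => p h * PD x)) rsum_scal PD1; ring.
Qed.

Lemma qD_distr {X H : finType} {PD : X -> R} {q : X -> H -> R} :
  is_distr PD -> is_cond_distr q -> is_distr (qD PD q).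
Proof.
move=> [PD0 PD1] q_distr; split.
  by move=> h; apply: rsum_ge0 => x; apply: Rmult_le_pos; [exact: (q_distr x).1 | exact: PD0].
rewrite /qD rsum_swap -PD1; apply: rsum_ext => x.
by rewrite (rsum_ext (fun h => PD x * q x h)) ?rsum_scal ?(q_distr x).2; [ring | move=> h; ring].
Qed.

Section MixtureLikelihood.
Variables (X H : finType) (PD : X -> R) (a : X -> H -> R).
Hypotheses (PD0 : forall x, 0 <= PD x) (PD1 : rsum PD = 1)
           (a0 : forall x h, 0 <= a x h).

Definition mix (p : H -> R) (x : X) : R := rsum (fun h => a x h * p h).

Variable pi : H -> R.
Hypotheses (pi0 : forall h, 0 <= pi h) (pi1 : rsum pi = 1)
           (mix_pi_pos : forall x, 0 < PD x -> 0 < mix pi x)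
           (pi_opt : forall p, is_distr p -> eR_le (Elog PD (mix p)) (Elog PD (mix pi))).

Lemma mix_towards_point t h0 x :
  mix (fun h => (1 - t) * pi h + t * (if h == h0 then 1 else 0)) x =
  (1 - t) * mix pi x + t * a x h0.
Proof.
rewrite /mix -(rsum_delta (a x) h0) -!rsum_scal -rsum_add.
by apply: rsum_ext => h; case: eqP => _; ring.
Qed.

(* First-order optimality of [pi] in the direction of each point mass. *)
Lemma mix_stationary h0 : rsum (fun x => PD x * (a x h0 / mix pi x)) <= 1.
Proof.
pose e x := a x h0 / mix pi x - 1.
suff : rsum (fun x => PD x * e x) <= 0.
  by rewrite (rsum_ext (fun x => PD x * (a x h0 / mix pi x) - PD x)) ?rsum_sub ?PD1;
    [lra | move=> x; rewrite /e; ring].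
apply: (@le0_of_small_bound _ (rsum (fun x => PD x * e x ^ 2))) => t [t_pos t_le].
pose p h := (1 - t) * pi h + t * (if h == h0 then 1 else 0).
have p_distr : is_distr p.
  split; first by move=> h; rewrite /p; case: eqP => _; have := pi0 h; nra.
  by rewrite /p rsum_add !rsum_scal pi1 (rsum_delta (fun _ => 1) h0); ring.
have mix_p_pos x : 0 < PD x -> 0 < mix p x.
  by move=> PDx; rewrite mix_towards_point; have := mix_pi_pos x PDx; have := a0 x h0; nra.
have step x : PD x * (t * (e x - 2 * t * e x ^ 2)) <=
              PD x * ln (mix p x) - PD x * ln (mix pi x).
  case: (Rle_lt_or_eq_dec _ _ (PD0 x)) => [PDx | <-]; last lra.
  rewrite mix_towards_point -Rmult_minus_distr_l; apply: Rmult_le_compat_l; first lra.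
  exact: ln_convex_step_lower (mix_pi_pos x PDx) (a0 x h0) (conj t_pos t_le).
have opt : rsum (fun x => PD x * ln (mix p x)) <= rsum (fun x => PD x * ln (mix pi x)).
  by have := pi_opt _ p_distr; rewrite !Elog_some.
have := rsum_le step; rewrite rsum_sub.
rewrite (rsum_ext (fun x => t * (PD x * e x - 2 * t * (PD x * e x ^ 2)))); last first.
  by move=> x; ring.
rewrite rsum_scal rsum_sub rsum_scal => gain.
by nra.
Qed.

(* EM fixed point: the PD-average of the posterior of [h] is [pi h].  By
   stationarity each side is at most [pi h], and both sum to 1 over [h]. *)
Lemma mix_self_consistent h :
  rsum (fun x => PD x * (a x h * pi h / mix pi x)) = pi h.
Proof.
apply: (@rsum_eq_le H (fun h => rsum (fun x => PD x * (a x h * pi h / mix pi x))) pi).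
- move=> h'; rewrite (rsum_ext (fun x => pi h' * (PD x * (a x h' / mix pi x)))).
    by rewrite rsum_scal; have := mix_stationary h'; have := pi0 h'; nra.
  by move=> x; rewrite /Rdiv; ring.
- rewrite rsum_swap pi1 -PD1; apply: rsum_ext => x.
  case: (Rle_lt_or_eq_dec _ _ (PD0 x)) => [PDx | <-].
    have s_pos := mix_pi_pos x PDx.
    rewrite (rsum_ext (fun h => PD x / mix pi x * (a x h * pi h))) ?rsum_scal.
      by rewrite -/(mix pi x); field; lra.
    by move=> h'; field; lra.
  by rewrite (rsum_ext (fun _ => 0)) ?rsum_0 // => h'; rewrite /Rdiv; ring.
Qed.

Variable r : H -> R.
Hypotheses (r0 : forall h, 0 <= r h) (r_pos : forall h, 0 < pi h -> 0 < r h).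

Lemma mix_r_pos x : 0 < mix pi x -> 0 < mix r x.
Proof.
move=> s_pos; apply: Rnot_le_lt => t_le.
have ar0 h : a x h * r h = 0.
  have := rsum_term (fun h => a x h * r h) h (fun h => Rmult_le_pos _ _ (a0 x h) (r0 h)).
  by have := Rmult_le_pos _ _ (a0 x h) (r0 h); rewrite -/(mix r x); lra.
suff : mix pi x = 0 by lra.
rewrite -(@rsum_0 H); apply: rsum_ext => h.
case: (Rle_lt_or_eq_dec _ _ (pi0 h)) => [pih | <-]; last ring.
have := ar0 h; have := r_pos h pih; have := a0 x h; nra.
Qed.

(* Gibbs inequality for the posterior w_x(h) = a(x,h) pi(h) / mix pi x. *)
Lemma ln_mix_ratio x : 0 < mix pi x ->
  ln (mix pi x) - ln (mix r x) <=
  rsum (fun h => if Rlt_dec 0 (pi h) then a x h * pi h / mix pi x * ln (pi h / r h) else 0).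
Proof.
move=> s_pos; have t_pos := mix_r_pos x s_pos.
set s := mix pi x in s_pos *; set t := mix r x in t_pos *.
pose w h := a x h * pi h / s.
have w0 h : 0 <= w h.
  apply: Rmult_le_pos; last by left; apply: Rinv_0_lt_compat.
  exact: Rmult_le_pos (a0 x h) (pi0 h).
have w1 : rsum w = 1.
  rewrite (rsum_ext (fun h => / s * (a x h * pi h))) ?rsum_scal -/(mix pi x) -/s.
    by field; lra.
  by move=> h; rewrite /w /Rdiv; ring.
have per_h h : (ln s - ln t) * w h -
               (if Rlt_dec 0 (pi h) then w h * ln (pi h / r h) else 0) <=
               / t * (a x h * r h) - w h.
  case: (Rlt_dec 0 (pi h)) => [pih | not_pih] /=; last first.
    have pi_h0 : pi h = 0 by have := pi0 h; lra.
    have -> : w h = 0 by rewrite /w pi_h0; field; lra.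
    by have := Rmult_le_pos _ _ (a0 x h) (r0 h); have := Rinv_0_lt_compat _ t_pos; nra.
  have rh := r_pos h pih.
  have z_pos : 0 < r h * s / (pi h * t) by apply: Rdiv_lt_0_compat; nra.
  have ln_z : ln (r h * s / (pi h * t)) = ln s - ln t - ln (pi h / r h).
    by rewrite !ln_div ?ln_mult //; try nra; lra.
  have := Rmult_le_compat_l _ _ _ (w0 h) (ln_le_sub1 z_pos).
  have -> : w h * (r h * s / (pi h * t) - 1) = / t * (a x h * r h) - w h.
    by rewrite /w; field; lra.
  by rewrite ln_z; lra.
have := rsum_le per_h.
rewrite !rsum_sub !rsum_scal w1 -/(mix r x) -/t.
have -> : / t * t = 1 by field; lra.
by rewrite /w; lra.
Qed.

Lemma mix_KL_bound :
  rsum (fun x => PD x * ln (mix pi x)) <=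
  rsum (fun x => PD x * ln (mix r x)) +
  rsum (fun h => if Rlt_dec 0 (pi h) then pi h * ln (pi h / r h) else 0).
Proof.
pose c x h := if Rlt_dec 0 (pi h) then a x h * pi h / mix pi x * ln (pi h / r h) else 0.
have per_x x : PD x * ln (mix pi x) - PD x * ln (mix r x) <= rsum (fun h => PD x * c x h).
  rewrite rsum_scal -Rmult_minus_distr_l.
  case: (Rle_lt_or_eq_dec _ _ (PD0 x)) => [PDx | <-]; last lra.
  by apply: Rmult_le_compat_l; [lra | exact: ln_mix_ratio x (mix_pi_pos x PDx)].
have := rsum_le per_x; rewrite rsum_sub rsum_swap.
rewrite (rsum_ext (fun h => if Rlt_dec 0 (pi h) then pi h * ln (pi h / r h) else 0)).
  by lra.
move=> h; rewrite /c; case: (Rlt_dec 0 (pi h)) => _ /=.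
  rewrite (rsum_ext (fun x => ln (pi h / r h) * (PD x * (a x h * pi h / mix pi x)))).
    by rewrite rsum_scal mix_self_consistent; ring.
  by move=> x; ring.
by rewrite (rsum_ext (fun _ => 0)) ?rsum_0 // => x; ring.
Qed.
End MixtureLikelihood.
Arguments mix {X H} a p x.

Theorem theorem1 (X H : finType) (TI TJ : Type)
  (PD : X -> R) (PI : TI -> X -> H -> R) (PJ : TJ -> H -> R)
  (hPD : is_distr PD)
  (hPI : forall tI h, is_distr (fun x => PI tI x h))
  (hPJ : forall tJ, is_distr (PJ tJ))
  (tIs : TI) (tJs : TJ)
  (hstar : forall tI tJ, eR_le (LL PD PI PJ tI tJ) (LL PD PI PJ tIs tJs))
  (tIh : TI) (qh : X -> H -> R)
  (hqh : is_cond_distr qh)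
  (hopt : forall tI q, is_cond_distr q -> eR_le (Lopt PD PI tI q) (Lopt PD PI tIh qh))
  (hfin : exists v, Lopt PD PI tIh qh = Some v) :
  (forall tJh : TJ, (forall h, PJ tJh h = qD PD qh h) ->
     (forall tI tJ, eR_le (LL PD PI PJ tI tJ) (LL PD PI PJ tIh tJh)) /\
     ((forall aI aJ, (forall tI tJ, eR_le (LL PD PI PJ tI tJ) (LL PD PI PJ aI aJ)) ->
                     aI = tIs /\ aJ = tJs) ->
      tIh = tIs /\ tJh = tJs)) /\
  (forall tJ : TJ,
     match KL (qD PD qh) (PJ tJ) with
     | None => True
     | Some k => eR_le (LL PD PI PJ tIs tJs) (eR_addr (LL PD PI PJ tIh tJ) k)
     end).
Proof.
have [PD0 PD1] := hPD.
(* Both objectives are mixture log-likelihoods; [q] constant in x turns the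
   optimistic objective into [L]. *)
have opt_const tI p : is_distr p -> eR_le (Elog PD (mix (PI tI) p)) (Lopt PD PI tIh qh).
  by move=> p_distr; have := hopt tI (fun _ => p) (fun _ => p_distr); rewrite /Lopt qD_const.
have LL_le_opt tI tJ : eR_le (LL PD PI PJ tI tJ) (Lopt PD PI tIh qh).
  exact: opt_const (hPJ tJ).
split.
  move=> tJh PJ_qD.
  have LL_hat : LL PD PI PJ tIh tJh = Lopt PD PI tIh qh.
    by rewrite /LL /Lopt /Pmarg (functional_extensionality _ _ PJ_qD).
  have best tI tJ : eR_le (LL PD PI PJ tI tJ) (LL PD PI PJ tIh tJh).
    by rewrite LL_hat.
  by split => // unique; exact: unique _ _ best.
move=> tJ; case KL_k : KL => [k|] //.
have [r_pos ->] := KL_inv KL_k.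
have [v Lopt_v] := hfin.
have [s_pos v_eq] := Elog_inv Lopt_v.
have [pi0 pi1] := qD_distr hPD hqh.
have a0 x h : 0 <= PI tIh x h by exact: (hPI tIh h).1.
have r0 h : 0 <= PJ tJ h by exact: (hPJ tJ).1.
(* L at the maximizer <= optimistic optimum = E log mix pi <= L(thI^,thJ) + KL. *)
apply: eR_le_trans (LL_le_opt tIs tJs) _.
rewrite Lopt_v v_eq /LL (Elog_some (f := mix (PI tIh) (PJ tJ))) /=; last first.
  by move=> x PDx; apply: mix_r_pos => //; exact: s_pos.
by apply: mix_KL_bound => // p p_distr; exact: opt_const.
Qed.
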